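(* Let $m$ be a positive integer and let $\phi_1,\phi_2,\phi_3$ be pairwise distinct permutations of $\mathbb{F}_{2^m}$ such that $\psi=\phi_1+\phi_2+\phi_3$ is a permutation of $\mathbb{F}_{2^m}$ and $\psi^{-1}=\phi_1^{-1}+\phi_2^{-1}+\phi_3^{-1}$. Let $h_1,h_2,h_3:\mathbb{F}_{2^m}\to\mathbb{F}_2$ and define $f_j:\mathbb{F}_{2^m}\times\mathbb{F}_{2^m}\to\mathbb{F}_2$ by $f_j(x,y)=Tr(x\phi_j(y))+h_j(y)$ for $j=1,2,3$. Suppose that for all $x\in\mathbb{F}_{2^m}$, $$h_1(\phi_1^{-1}(x))+h_2(\phi_2^{-1}(x))+h_3(\phi_3^{-1}(x))+(h_1+h_2+h_3)(\psi^{-1}(x))=1.$$ Then $f_1,f_2,f_3$ and $f_4=f_1+f_2+f_3$ are bent and $f_1^*+f_2^*+f_3^*+f_4^*=1$ identically.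
   Context: $Tr$ denotes the absolute trace $\mathbb{F}_{2^m}\to\mathbb{F}_2$. A Boolean function $F:\mathbb{F}_{2^m}\times\mathbb{F}_{2^m}\to\mathbb{F}_2$ is bent if its Walsh transform $W_F(a,b)=\sum_{x,y}(-1)^{F(x,y)+Tr(ax+by)}$ satisfies $|W_F(a,b)|=2^m$ for all $(a,b)$; its dual $F^*$ is the Boolean function defined by $W_F(a,b)=2^m(-1)^{F^*(a,b)}$. *)

From HB Require Import structures.
From mathcomp Require Import all_boot all_order all_algebra all_fingroup all_field.
Set Implicit Arguments. Unset Strict Implicit. Unset Printing Implicit Defensive.
Import Order.TTheory GRing.Theory Num.Theory.
Local Open Scope ring_scope.

(* F plays the role of F_{2^m}; F_2 is identified with bool (addition = xor). *)

(* Absolute trace F_{2^m} -> F_2: Tr x = sum_{i<m} x^(2^i); its value lies in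
   {0,1} of F, and we return it as a boolean (true <-> 1). *)
Definition absTr (F : finFieldType) (m : nat) (x : F) : bool :=
  (\sum_(i < m) x ^+ (2 ^ i)) == 1.

Definition walsh (F : finFieldType) (m : nat) (f : F -> F -> bool) (a b : F) : int :=
  \sum_(x : F) \sum_(y : F)
     (-1 : int) ^+ (f x y (+) absTr m (a * x + b * y)).

Definition bent (F : finFieldType) (m : nat) (f : F -> F -> bool) : Prop :=
  forall a b : F, `|walsh m f a b| = 2%:Z ^+ m.

(* Dual: W_f(a,b) = 2^m (-1)^{f*(a,b)}; for bent f, f*(a,b) = 1 iff W_f(a,b) = -2^m. *)
Definition dual (F : finFieldType) (m : nat) (f : F -> F -> bool) (a b : F) : bool :=
  walsh m f a b == - (2%:Z ^+ m).

(* The functions f_j(x, y) = Tr(x phi_j(y)) + h_j(y) are of Maiorana-McFarland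
   type: summing over x first, orthogonality of the additive character
   x |-> (-1)^Tr(x c) kills every y except y = phi^-1(a), so
   W_f(a, b) = 2^m (-1)^(h(phi^-1 a) + Tr(b phi^-1 a)) and f is bent with that
   exponent as dual.  Since psi = phi_1 + phi_2 + phi_3, f_4 is again of this
   type with permutation psi and h = h_1 + h_2 + h_3.  Adding the four duals,
   the trace terms cancel because psi^-1 = phi_1^-1 + phi_2^-1 + phi_3^-1, and
   what remains is exactly the hypothesis on the h_j. *)

From HB Require Import structures.
From mathcomp Require Import all_boot all_order all_algebra all_fingroup all_field.
Set Implicit Arguments.
Unset Strict Implicit.
Unset Printing Implicit Defensive.
Import Order.TTheory GRing.Theory Num.Theory.
Local Open Scope ring_scope.

Section AbsoluteTrace.
Variables (F : finFieldType) (m : nat).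
Hypothesis cardF : #|F| = (2 ^ m)%N.

Lemma pchar2_F : 2%N \in [pchar F].
Proof. exact: card_finPcharP cardF _. Qed.

Lemma ext_degree_gt0 : (0 < m)%N.
Proof. by have := finNzRing_gt1 F; rewrite cardF; case: m. Qed.

Lemma exprD_pow2 (x y : F) i : (x + y) ^+ (2 ^ i) = x ^+ (2 ^ i) + y ^+ (2 ^ i).
Proof. by apply: exprDn_pchar; rewrite pnatX pnatE // pchar2_F. Qed.

Definition trace (x : F) : F := \sum_(i < m) x ^+ (2 ^ i).

Lemma traceD x y : trace (x + y) = trace x + trace y.
Proof. by rewrite -big_split; apply: eq_bigr => i _; rewrite exprD_pow2. Qed.

Lemma trace0 : trace 0 = 0.
Proof. by rewrite /trace big1 // => i _; rewrite expr0n expn_eq0. Qed.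

(* Frobenius shifts the terms of the sum cyclically, as x ^+ 2 ^ m = x. *)
Lemma trace_sqr x : trace x ^+ 2 = trace x.
Proof.
rewrite -(pFrobenius_autE pchar2_F) rmorph_sum /trace.
case: m ext_degree_gt0 cardF => // n _ cardFn.
rewrite big_ord_recr [in RHS]big_ord_recl /= addrC.
rewrite pFrobenius_autE -exprM -expnSr -cardFn expf_card expn0 expr1.
by congr (_ + _); apply: eq_bigr => i _; rewrite pFrobenius_autE -exprM -expnSr.
Qed.

Lemma trace01 x : (trace x == 0) || (trace x == 1).
Proof.
have : trace x * (trace x - 1) == 0 by rewrite mulrBr mulr1 -expr2 trace_sqr subrr.
by rewrite mulf_eq0 subr_eq0.
Qed.

Definition trace_poly : {poly F} := \sum_(i < m) 'X^(2 ^ i).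

Lemma horner_trace_poly x : trace_poly.[x] = trace x.
Proof. by rewrite horner_sum; apply: eq_bigr => i _; rewrite hornerXn. Qed.

Lemma size_trace_poly : size trace_poly = (2 ^ m.-1).+1.
Proof.
rewrite /trace_poly; case: m ext_degree_gt0 => // n _.
rewrite big_ord_recr /= addrC size_polyDl size_polyXn //.
apply: leq_ltn_trans (size_sum _ _ _) _; apply/bigmax_leqP => i _.
by rewrite size_polyXn ltn_exp2l.
Qed.

(* Otherwise every element of F would be a root of trace_poly, whose degree
   2 ^ m.-1 is smaller than #|F|. *)
Lemma exists_trace1 : exists c, trace c = 1.
Proof.
case: (pickP (fun c => trace c == 1)) => [c /eqP|no_trace1]; first by exists c.
have trace_poly_neq0 : trace_poly != 0 by rewrite -size_poly_gt0 size_trace_poly.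
have all_roots : all (root trace_poly) (enum F).
  apply/allP => x _; rewrite /root horner_trace_poly.
  by have := trace01 x; rewrite no_trace1 orbF.
have := max_poly_roots trace_poly_neq0 all_roots (enum_uniq F).
rewrite -cardE cardF size_trace_poly ltnS leq_exp2l //.
by case: m ext_degree_gt0 => // n _; rewrite ltnn.
Qed.

Lemma absTrD (x y : F) : absTr m (x + y) = absTr m x (+) absTr m y.
Proof.
rewrite /absTr; change ((trace (x + y) == 1) = (trace x == 1) (+) (trace y == 1)).
have zero_neq1 : (0 : F) == 1 = false by rewrite eq_sym oner_eq0.
rewrite traceD.
by case/orP: (trace01 x) => /eqP->; case/orP: (trace01 y) => /eqP->;
  rewrite ?addr0 ?add0r ?addrr_pchar2 ?pchar2_F ?eqxx ?zero_neq1.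
Qed.

Lemma absTr0 : absTr m (0 : F) = false.
Proof. by rewrite /absTr; change (trace 0 == 1 = false); rewrite trace0 eq_sym oner_eq0. Qed.

Lemma exists_absTr : exists c : F, absTr m c.
Proof. by have [c trace_c] := exists_trace1; exists c; apply/eqP. Qed.

End AbsoluteTrace.

Section WalshSpectrum.
Variables (F : finFieldType) (m : nat).
Hypothesis cardF : #|F| = (2 ^ m)%N.

Lemma sum_sign_absTr_mul (c : F) :
  \sum_(x : F) (-1 : int) ^+ absTr m (x * c) = if c == 0 then 2%:Z ^+ m else 0.
Proof.
have [->|c_neq0] := eqVneq c 0.
  under eq_bigr => x _ do rewrite mulr0 absTr0 expr0.
  by rewrite sumr_const cardF natrX.
have [x0 absTr_x0] := exists_absTr cardF.
set S := \sum_(x : F) _.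
suff : S = - S by move/eqP; rewrite -addr_eq0 -mulr2n mulrn_eq0 => /eqP.
rewrite {1}/S (reindex_inj (addIr (x0 / c))) -sumrN; apply: eq_bigr => x _.
by rewrite mulrDl divfK // absTrD // absTr_x0 signr_addb expr1 mulrN1.
Qed.

Lemma eq_walsh (f g : F -> F -> bool) a b :
  f =2 g -> walsh m f a b = walsh m g a b.
Proof. by move=> eq_fg; apply: eq_bigr => x _; apply: eq_bigr => y _; rewrite eq_fg. Qed.

Definition maiorana_mcfarland (phi : F -> F) (h : F -> bool) (x y : F) : bool :=
  absTr m (x * phi y) (+) h y.

Lemma maiorana_mcfarlandD phi1 phi2 h1 h2 x y :
  maiorana_mcfarland phi1 h1 x y (+) maiorana_mcfarland phi2 h2 x y =
  maiorana_mcfarland (phi1 \+ phi2) (fun y => h1 y (+) h2 y) x y.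
Proof. by rewrite /maiorana_mcfarland /= mulrDr absTrD // addbACA. Qed.

Lemma walsh_maiorana_mcfarland (phi : {perm F}) h a b :
  walsh m (maiorana_mcfarland phi h) a b =
  2%:Z ^+ m * (-1) ^+ (h ((phi^-1)%g a) (+) absTr m (b * (phi^-1)%g a)).
Proof.
rewrite /walsh exchange_big /=.
have inner_sum y : \sum_(x : F) (-1 : int) ^+
      (maiorana_mcfarland phi h x y (+) absTr m (a * x + b * y)) =
    (if phi y + a == 0 then 2%:Z ^+ m else 0) * (-1) ^+ (h y (+) absTr m (b * y)).
  rewrite -sum_sign_absTr_mul // mulr_suml; apply: eq_bigr => x _.
  rewrite -signr_addb mulrDr (mulrC x a) !absTrD //.
  by rewrite /maiorana_mcfarland addbACA.
rewrite (eq_bigr _ (fun y _ => inner_sum y)) (bigD1 (phi^-1 a)%g) //=.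
rewrite permKV (addrr_pchar2 (pchar2_F cardF)) eqxx big1 ?addr0 // => y y_neq.
suff -> : (phi y + a == 0) = false by rewrite mul0r.
apply: contraNF y_neq; rewrite addr_eq0 (oppr_pchar2 (pchar2_F cardF)) => /eqP <-.
by rewrite permK.
Qed.

Section SignedWalsh.
Variables (f : F -> F -> bool) (k : F -> F -> bool).
Hypothesis walsh_f : forall a b, walsh m f a b = 2%:Z ^+ m * (-1) ^+ k a b.

Lemma bent_of_walsh_sign : bent m f.
Proof.
by move=> a b; rewrite walsh_f normrM normr_sign mulr1 ger0_norm // exprn_ge0.
Qed.

Lemma dual_of_walsh_sign a b : dual m f a b = k a b.
Proof.
have pow_gt0 : 0 < 2%:Z ^+ m by rewrite exprn_gt0.
rewrite /dual walsh_f; case: (k a b); first by rewrite expr1 mulrN1 eqxx.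
by rewrite expr0 mulr1 -subr_eq0 opprK gt_eqF // addr_gt0.
Qed.

End SignedWalsh.

End WalshSpectrum.

Theorem theorem7 (m : nat) (F : finFieldType) (hm : (0 < m)%N)
  (hF : #|F| = (2 ^ m)%N)
  (phi1 phi2 phi3 psi : {perm F})
  (h12 : phi1 != phi2) (h13 : phi1 != phi3) (h23 : phi2 != phi3)
  (hpsi : forall x : F, psi x = phi1 x + phi2 x + phi3 x)
  (hpsiinv : forall x : F,
     (psi^-1)%g x = (phi1^-1)%g x + (phi2^-1)%g x + (phi3^-1)%g x)
  (h1 h2 h3 : F -> bool)
  (hh : forall x : F,
     h1 ((phi1^-1)%g x) (+) h2 ((phi2^-1)%g x) (+) h3 ((phi3^-1)%g x)
     (+) (h1 ((psi^-1)%g x) (+) h2 ((psi^-1)%g x) (+) h3 ((psi^-1)%g x)) = true) :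
  let f1 := fun x y : F => absTr m (x * phi1 y) (+) h1 y in
  let f2 := fun x y : F => absTr m (x * phi2 y) (+) h2 y in
  let f3 := fun x y : F => absTr m (x * phi3 y) (+) h3 y in
  let f4 := fun x y : F => f1 x y (+) f2 x y (+) f3 x y in
  [/\ bent m f1, bent m f2, bent m f3, bent m f4 &
      forall a b : F,
        dual m f1 a b (+) dual m f2 a b (+) dual m f3 a b (+) dual m f4 a b = true].
Proof.
move=> f1 f2 f3 f4.
have walsh_f4 a b : walsh m f4 a b =
    walsh m (maiorana_mcfarland m psi (fun y => h1 y (+) h2 y (+) h3 y)) a b.
  apply: eq_walsh => x y.
  rewrite -[f4 x y]/(maiorana_mcfarland m phi1 h1 x y
    (+) maiorana_mcfarland m phi2 h2 x y (+) maiorana_mcfarland m phi3 h3 x y).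
  by rewrite !(maiorana_mcfarlandD hF) /maiorana_mcfarland /= hpsi.
have {}walsh_f4 a b := etrans (walsh_f4 a b) (walsh_maiorana_mcfarland hF _ _ a b).
have walsh_mm := walsh_maiorana_mcfarland hF.
split; [exact: bent_of_walsh_sign (walsh_mm _ _).. | exact: bent_of_walsh_sign walsh_f4 |].
move=> a b; rewrite !(dual_of_walsh_sign (walsh_mm _ _)) (dual_of_walsh_sign walsh_f4).
have -> : absTr m (b * (psi^-1)%g a) = absTr m (b * (phi1^-1)%g a)
    (+) absTr m (b * (phi2^-1)%g a) (+) absTr m (b * (phi3^-1)%g a).
  by rewrite hpsiinv !mulrDr !(absTrD hF).
rewrite [X in X (+) _ (+) _]addbACA [X in X (+) _]addbACA addbACA addbb addbF.
exact: hh.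
Qed.
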